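(* Let $A$ be a quasi-quantale and let $j$ be a contextual nucleus on $A$. Let $A_j=\{a\in A\mid j(a)=a\}$, which is a complete lattice whose join of $X\subseteq A_j$ is $\bigvee^j X=j(\bigvee X)$, and define on $A_j$ the operation $a\cdot b=j(ab)$. Then $(A_j,\cdot)$ is a quasi-quantale. If moreover $A$ is a left-unital quasi-quantale with identity $e$ (i.e. $ea=a$ for all $a\in A$), then $A_j$ is a left-unital quasi-quantale with identity $j(e)$.
   Context: A quasi-quantale is a complete lattice $A$ equipped with an associative binary operation $(a,b)\mapsto ab$ such that for every directed subset $X\subseteq A$ (non-empty, and any two elements of $X$ have an upper bound in $X$) and every $a\in A$: $(\bigvee X)a=\bigvee\{xa\mid x\in X\}$ and $a(\bigvee X)=\bigvee\{ax\mid x\in X\}$. An inflator on $A$ is a monotone map $s\colon A\to A$ with $a\leq s(a)$ for all $a$. A contextual nucleus is an inflator $j$ with $j\circ j=j$ and $j(a)j(b)\leq j(ab)$ for all $a,b\in A$. *)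

Set Implicit Arguments.

Definition image (S U : Type) (f : S -> U) (X : S -> Prop) : U -> Prop :=
  fun y => exists x, X x /\ y = f x.

Section Defs.
Variable T : Type.

Record is_complete_lattice (le : T -> T -> Prop) (sup : (T -> Prop) -> T) : Prop := {
  cl_refl : forall x, le x x;
  cl_trans : forall x y z, le x y -> le y z -> le x z;
  cl_antisym : forall x y, le x y -> le y x -> x = y;
  cl_sup_ub : forall (X : T -> Prop) x, X x -> le x (sup X);
  cl_sup_least : forall (X : T -> Prop) u, (forall x, X x -> le x u) -> le (sup X) u
}.

Definition directed (le : T -> T -> Prop) (X : T -> Prop) : Prop :=
  (exists x, X x) /\
  forall x y, X x -> X y -> exists z, X z /\ le x z /\ le y z.

Definition associative_op (mul : T -> T -> T) : Prop :=
  forall a b c, mul (mul a b) c = mul a (mul b c).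

Definition is_quasi_quantale (le : T -> T -> Prop) (sup : (T -> Prop) -> T)
    (mul : T -> T -> T) : Prop :=
  is_complete_lattice le sup /\ associative_op mul /\
  forall (X : T -> Prop) (a : T), directed le X ->
    mul (sup X) a = sup (image (fun x => mul x a) X) /\
    mul a (sup X) = sup (image (fun x => mul a x) X).

Definition left_identity (mul : T -> T -> T) (e : T) : Prop :=
  forall a, mul e a = a.

Definition is_left_unital_quasi_quantale (le : T -> T -> Prop)
    (sup : (T -> Prop) -> T) (mul : T -> T -> T) (e : T) : Prop :=
  is_quasi_quantale le sup mul /\ left_identity mul e.

Definition monotone (le : T -> T -> Prop) (s : T -> T) : Prop :=
  forall a b, le a b -> le (s a) (s b).

Definition inflator (le : T -> T -> Prop) (s : T -> T) : Prop :=
  monotone le s /\ forall a, le a (s a).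

Record contextual_nucleus (le : T -> T -> Prop) (mul : T -> T -> T) (j : T -> T)
    : Prop := {
  cn_inflator : inflator le j;
  cn_idem : forall a, j (j a) = j a;
  cn_mul : forall a b, le (mul (j a) (j b)) (j (mul a b))
}.

Definition fixset (j : T -> T) : Type := { a : T | j a = a }.

Definition fix_le (j : T -> T) (le : T -> T -> Prop) (a b : fixset j) : Prop :=
  le (proj1_sig a) (proj1_sig b).

Definition fix_sup (j : T -> T) (idem : forall a, j (j a) = j a)
    (sup : (T -> Prop) -> T) (X : fixset j -> Prop) : fixset j :=
  exist (fun a => j a = a) (j (sup (image (@proj1_sig T (fun a => j a = a)) X)))
        (idem (sup (image (@proj1_sig T (fun a => j a = a)) X))).

Definition fix_mul (j : T -> T) (idem : forall a, j (j a) = j a)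
    (mul : T -> T -> T) (a b : fixset j) : fixset j :=
  exist (fun x => j x = x) (j (mul (proj1_sig a) (proj1_sig b)))
        (idem (mul (proj1_sig a) (proj1_sig b))).

Definition fix_of (j : T -> T) (idem : forall a, j (j a) = j a) (e : T)
    : fixset j :=
  exist (fun x => j x = x) (j e) (idem e).

End Defs.

From Stdlib Require Import Setoid ProofIrrelevance.

Set Implicit Arguments.
Unset Strict Implicit.

(* Everything rests on the absorption law j (j x * j y) = j (x * y) of a
   contextual nucleus (from j x * j y <= j (x * y) and monotonicity of the
   product): it makes j a homomorphism onto A_j, so associativity, the left
   identity j e and the preservation of directed joins (a directed family in
   A_j is directed in A) transfer from A to A_j. *)

Lemma image_image (S U V : Type) (f : U -> V) (g : S -> U) (X : S -> Prop) (y : V) :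
  image f (image g X) y <-> image (fun x => f (g x)) X y.
Proof.
  split.
  - intros [u [[x [hx ->]] ->]]. exists x; auto.
  - intros [x [hx ->]]. exists (g x); split; [exists x; auto | reflexivity].
Qed.

Section CompleteLattice.
Variables (T : Type) (le : T -> T -> Prop) (sup : (T -> Prop) -> T).
Hypothesis hL : is_complete_lattice le sup.

Lemma sup_ext (X Y : T -> Prop) : (forall x, X x <-> Y x) -> sup X = sup Y.
Proof.
  intros hXY. apply (cl_antisym hL).
  - apply (cl_sup_least hL). intros x hx. apply (cl_sup_ub hL), hXY, hx.
  - apply (cl_sup_least hL). intros x hx. apply (cl_sup_ub hL), hXY, hx.
Qed.

Lemma sup_pair_of_le (a b : T) : le a b -> sup (fun x => x = a \/ x = b) = b.
Proof.
  intros hab. apply (cl_antisym hL).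
  - apply (cl_sup_least hL). intros x [-> | ->]; [exact hab | apply (cl_refl hL)].
  - apply (cl_sup_ub hL). auto.
Qed.

Lemma directed_pair_of_le (a b : T) : le a b -> directed le (fun x => x = a \/ x = b).
Proof.
  intros hab. split; [exists a; auto |].
  intros x y hx hy. exists b. split; [auto |].
  pose proof (cl_refl hL b) as hbb.
  destruct hx as [-> | ->], hy as [-> | ->]; split; assumption.
Qed.

End CompleteLattice.

Section QuasiQuantale.
Variables (T : Type) (le : T -> T -> Prop) (sup : (T -> Prop) -> T) (mul : T -> T -> T).
Hypothesis hA : is_quasi_quantale le sup mul.

(* Monotonicity: a pair a <= b is a directed set with join b. *)
Lemma qq_mul_monotone_l (a b c : T) : le a b -> le (mul a c) (mul b c).
Proof.
  intros hab. destruct hA as [hL [_ hD]].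
  destruct (hD _ c (directed_pair_of_le hL hab)) as [hsup _].
  rewrite (sup_pair_of_le hL hab) in hsup. rewrite hsup.
  apply (cl_sup_ub hL). exists a; auto.
Qed.

Lemma qq_mul_monotone_r (a b c : T) : le a b -> le (mul c a) (mul c b).
Proof.
  intros hab. destruct hA as [hL [_ hD]].
  destruct (hD _ c (directed_pair_of_le hL hab)) as [_ hsup].
  rewrite (sup_pair_of_le hL hab) in hsup. rewrite hsup.
  apply (cl_sup_ub hL). exists a; auto.
Qed.

End QuasiQuantale.

Section ClosureOperator.
Variables (T : Type) (le : T -> T -> Prop) (sup : (T -> Prop) -> T) (j : T -> T).
Hypothesis hL : is_complete_lattice le sup.
Hypothesis hj : inflator le j.
Variable idem : forall a, j (j a) = j a.

Lemma fixset_eq (a b : fixset j) : proj1_sig a = proj1_sig b -> a = b.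
Proof.
  destruct a as [a ha], b as [b hb]; simpl; intros ->.
  f_equal; apply proof_irrelevance.
Qed.

Lemma closure_sup_image (X : T -> Prop) : j (sup (image j X)) = j (sup X).
Proof.
  destruct hj as [hmono hinfl].
  apply (cl_antisym hL).
  - rewrite <- (idem (sup X)). apply hmono, (cl_sup_least hL).
    intros y [x [hx ->]]. apply hmono, (cl_sup_ub hL), hx.
  - apply hmono, (cl_sup_least hL). intros x hx.
    apply (cl_trans hL) with (j x); [apply hinfl |].
    apply (cl_sup_ub hL). exists x; auto.
Qed.

Lemma fix_complete_lattice : is_complete_lattice (fix_le le) (fix_sup idem sup).
Proof.
  destruct hj as [hmono hinfl].
  constructor; unfold fix_le.
  - intros x. apply (cl_refl hL).
  - intros x y z. apply (cl_trans hL).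
  - intros x y hxy hyx. apply fixset_eq, (cl_antisym hL); assumption.
  - intros X x hx. simpl. apply (cl_trans hL) with (sup (image (@proj1_sig _ _) X)).
    + apply (cl_sup_ub hL). exists x; auto.
    + apply hinfl.
  - intros X [u hu] hub. simpl in *. rewrite <- hu.
    apply hmono, (cl_sup_least hL). intros y [x [hx ->]]. apply hub, hx.
Qed.

Lemma directed_image_proj1 (X : fixset j -> Prop) :
  directed (fix_le le) X -> directed le (image (@proj1_sig _ _) X).
Proof.
  intros [[x hx] hdir]. split.
  - exists (proj1_sig x), x; auto.
  - intros y z [y0 [hy0 ->]] [z0 [hz0 ->]].
    destruct (hdir y0 z0 hy0 hz0) as [w [hw [hyw hzw]]].
    exists (proj1_sig w). split; [exists w; auto | auto].
Qed.

End ClosureOperator.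

Section Nucleus.
Variables (T : Type) (le : T -> T -> Prop) (sup : (T -> Prop) -> T) (mul : T -> T -> T)
  (j : T -> T).
Hypothesis hA : is_quasi_quantale le sup mul.
Hypothesis hj : contextual_nucleus le mul j.

Let hL : is_complete_lattice le sup := proj1 hA.
Let idem := cn_idem hj.

Lemma nucleus_mul_absorb (x y : T) : j (mul (j x) (j y)) = j (mul x y).
Proof.
  destruct (cn_inflator hj) as [hmono hinfl].
  apply (cl_antisym hL).
  - rewrite <- (idem (mul x y)). apply hmono, (cn_mul hj).
  - apply hmono, (cl_trans hL) with (mul (j x) y).
    + apply (qq_mul_monotone_l hA), hinfl.
    + apply (qq_mul_monotone_r hA), hinfl.
Qed.

Lemma nucleus_mul_absorb_l (x y : T) : j y = y -> j (mul (j x) y) = j (mul x y).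
Proof. intros hy. rewrite <- hy at 1. apply nucleus_mul_absorb. Qed.

Lemma nucleus_mul_absorb_r (x y : T) : j x = x -> j (mul x (j y)) = j (mul x y).
Proof. intros hx. rewrite <- hx at 1. apply nucleus_mul_absorb. Qed.

Lemma fix_mul_assoc : associative_op (fix_mul idem mul).
Proof.
  intros [a ha] [b hb] [c hc]. apply fixset_eq. simpl.
  rewrite (nucleus_mul_absorb_l _ hc), (nucleus_mul_absorb_r _ ha).
  f_equal. apply (proj1 (proj2 hA)).
Qed.

Lemma fix_mul_sup_l (X : fixset j -> Prop) (a : fixset j) :
  directed (fix_le le) X ->
  fix_mul idem mul (fix_sup idem sup X) a
  = fix_sup idem sup (image (fun x => fix_mul idem mul x a) X).
Proof.
  intros hX. destruct a as [a ha]. apply fixset_eq. simpl.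
  rewrite (nucleus_mul_absorb_l _ ha).
  rewrite (proj1 (proj2 (proj2 hA) _ a (directed_image_proj1 hX))).
  rewrite <- (closure_sup_image hL (cn_inflator hj) idem).
  f_equal. apply (sup_ext hL). intros y.
  rewrite image_image, image_image, image_image. reflexivity.
Qed.

Lemma fix_mul_sup_r (X : fixset j -> Prop) (a : fixset j) :
  directed (fix_le le) X ->
  fix_mul idem mul a (fix_sup idem sup X)
  = fix_sup idem sup (image (fun x => fix_mul idem mul a x) X).
Proof.
  intros hX. destruct a as [a ha]. apply fixset_eq. simpl.
  rewrite (nucleus_mul_absorb_r _ ha).
  rewrite (proj2 (proj2 (proj2 hA) _ a (directed_image_proj1 hX))).
  rewrite <- (closure_sup_image hL (cn_inflator hj) idem).
  f_equal. apply (sup_ext hL). intros y.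
  rewrite image_image, image_image, image_image. reflexivity.
Qed.

Lemma fix_quasi_quantale :
  is_quasi_quantale (fix_le le) (fix_sup idem sup) (fix_mul idem mul).
Proof.
  split; [| split].
  - exact (fix_complete_lattice hL (cn_inflator hj) idem).
  - exact fix_mul_assoc.
  - intros X a hX. split; [apply fix_mul_sup_l | apply fix_mul_sup_r]; exact hX.
Qed.

Lemma fix_left_identity (e : T) :
  left_identity mul e -> left_identity (fix_mul idem mul) (@fix_of T j idem e).
Proof.
  intros he [a ha]. apply fixset_eq. simpl.
  rewrite (nucleus_mul_absorb_l _ ha), he. exact ha.
Qed.

End Nucleus.

Theorem proposition3p9 (T : Type) (le : T -> T -> Prop) (sup : (T -> Prop) -> T)
    (mul : T -> T -> T) (j : T -> T)
    (hA : is_quasi_quantale le sup mul)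
    (hj : contextual_nucleus le mul j) :
  is_quasi_quantale (@fix_le T j le) (fix_sup (cn_idem hj) sup)
                    (fix_mul (cn_idem hj) mul) /\
  (forall e : T, is_left_unital_quasi_quantale le sup mul e ->
     is_left_unital_quasi_quantale (@fix_le T j le) (fix_sup (cn_idem hj) sup)
       (fix_mul (cn_idem hj) mul) (@fix_of T j (cn_idem hj) e)).
Proof.
  split.
  - exact (fix_quasi_quantale hA hj).
  - intros e [_ he]. split.
    + exact (fix_quasi_quantale hA hj).
    + exact (fix_left_identity hA hj he).
Qed.
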